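(* Let $f\colon\{0,1\}^n\to\{0,1\}^n$ and $F(x,i)=f(x)_{1,\ldots,i-1}$ on $\{0,1\}^n\times[n]$. Let $A^*$ be the randomized algorithm that on input $(x,i)$ outputs a uniformly random $x'\in\{0,1\}^n$ with $f(x')_{1,\ldots,i-1}=f(x)_{1,\ldots,i-1}$. Consider the oracle algorithm $\mathrm{ExtendOne}^{C}(x,b,i)$: set $j:=0$; repeat { $x':=C(x,i)$ with fresh randomness; $j:=j+1$ } until $f(x')_i=b$; return $(x',j)$. Consider the oracle algorithm $\mathrm{Inv}^{C}(y)$ for $y\in\{0,1\}^n$: choose $x^{(0)}$ uniformly in $\{0,1\}^n$; for $i=1$ to $n$ let $(x^{(i)},j):=\mathrm{ExtendOne}^{C}(x^{(i-1)},y_i,i)$; return $x^{(n)}$. Then the expected number of calls to $A^*$ in a random execution of $\mathrm{Inv}^{A^*}(y)$ with $y=f(x)$ for $x$ uniform in $\{0,1\}^n$ is at most $2n$.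
   Context: $y_i$ denotes the $i$-th bit of $y$ and $y_{1,\ldots,i}$ its first $i$ bits. *)

From HB Require Import structures.
From mathcomp Require Import all_boot all_order all_algebra.
From mathcomp Require Import all_classical all_reals all_analysis.
Set Implicit Arguments. Unset Strict Implicit. Unset Printing Implicit Defensive.
Import Order.TTheory GRing.Theory Num.Theory.
Local Open Scope ring_scope.

(* Bit strings of length n; bit k (0-indexed) of u is u k.
   Paper's 1-indexed round i in [n] is our 0-indexed stage i : 'I_n, so
   "first i-1 bits" = bits with index < i (0-indexed). *)
Definition bits (n : nat) := {ffun 'I_n -> bool}.

Section Inv.
Variables (R : realType) (n : nat) (f : bits n -> bits n).

Definition agree (i : nat) (u v : bits n) : bool :=
  [forall k : 'I_n, (k < i)%N ==> (u k == v k)].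

Definition Astar_supp (x : bits n) (i : 'I_n) : {set bits n} :=
  [set x' | agree i (f x') (f x)].

Definition Astar_prob (x : bits n) (i : 'I_n) (x' : bits n) : R :=
  if x' \in Astar_supp x i then (#|Astar_supp x i|%:R)^-1 else 0.

(* cs = sequence of outputs of the oracle calls during ExtendOne(x,b,i);
   it is a terminating run iff it is nonempty, its last element c has
   f(c)_i = b, and all earlier ones have f(.)_i <> b. *)
Definition extend_ok (b : bool) (i : 'I_n) (cs : seq (bits n)) : bool :=
  match rev cs with
  | [::] => false
  | c :: fails => (f c i == b) && all (fun d => f d i != b) fails
  end.

(* Probability of the terminating run cs of ExtendOne^{A^*}(x,b,i)
   (each call uses fresh independent randomness). *)
Definition extend_weight (x : bits n) (b : bool) (i : 'I_n)
    (cs : seq (bits n)) : R :=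
  if extend_ok b i cs then \prod_(c <- cs) Astar_prob x i c else 0.

(* Probability of the sequence of rounds [stages] (each round's call
   outputs given by css), starting from current point x, with target y.
   The output of ExtendOne is the last call output, [last x cs]. *)
Fixpoint run_weight (y : bits n) (stages : seq 'I_n) (x : bits n)
    (css : seq (seq (bits n))) : R :=
  match stages, css with
  | [::], [::] => 1
  | i :: st, cs :: css' =>
      extend_weight x (y i) i cs * run_weight y st (last x cs) css'
  | _, _ => 0
  end.

(* A terminating execution of Inv^{A^*}(y) is determined by x^(0) and
   the oracle outputs of rounds 1..n; its probability: *)
Definition trace_weight (y : bits n) (t : bits n * seq (seq (bits n))) : R :=
  (#|{: bits n}|%:R)^-1 * run_weight y (enum 'I_n) t.1 t.2.

Definition trace_calls (t : bits n * seq (seq (bits n))) : nat :=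
  sumn (map size t.2).

(* Expected number of calls to A^* in a random execution of Inv^{A^*}(y).
   If non-termination has positive probability (terminating runs have
   total probability < 1), the expectation is +oo. *)
Definition expected_calls (y : bits n) : \bar R :=
  if (\esum_(t in [set: bits n * seq (seq (bits n))])
        (trace_weight y t)%:E == 1%E)
  then \esum_(t in [set: bits n * seq (seq (bits n))])
         (trace_weight y t * (trace_calls t)%:R)%:E
  else +oo%E.

Definition expected_calls_random : \bar R :=
  (\sum_(x : bits n) ((#|{: bits n}|%:R)^-1)%:E * expected_calls (f x))%E.

End Inv.

(* Write S_k(y) for the set of x whose image f(x) agrees with y on its first k
   bits.  Round i of Inv starts from a point of S_i(y) and calls A^* until the
   output lands in S_(i+1)(y); each call is uniform on S_i(y), so the number of
   calls is geometric with success probability |S_(i+1)(y)|/|S_i(y)|: the round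
   ends almost surely, inside S_(i+1)(y), after |S_i(y)|/|S_(i+1)(y)| calls on
   average.  For y = f(x) with x uniform this ratio averages to at most 2:
   exchanging summations, sum_x |S_i(f x)|/|S_(i+1)(f x)| counts, for each x',
   the classes S_(i+1) into which bit i splits S_i(f x'), and there are at
   most two of them. *)

From HB Require Import structures.
From mathcomp Require Import all_boot all_order all_algebra.
From mathcomp Require Import all_classical all_reals all_analysis.
From mathcomp Require Import ring lra.
Set Implicit Arguments. Unset Strict Implicit. Unset Printing Implicit Defensive.
Import Order.TTheory GRing.Theory Num.Theory.
Local Open Scope ring_scope.

Section NonnegativeSums.
Variable R : realType.
Local Open Scope classical_set_scope.
Local Open Scope ereal_scope.

Lemma esumZl (T : choiceType) (S : set T) (a : T -> \bar R) (r : R) :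
  (0 <= r)%R -> (forall x, 0 <= a x) ->
  \esum_(i in S) (r%:E * a i) = r%:E * \esum_(i in S) a i.
Proof.
move=> r0 a0; rewrite /esum -ereal_supZl //; last first.
  by apply/set0P; exists 0, set0; [exact: fsets_set0 | rewrite fsbig_set0].
congr ereal_sup; apply/seteqP; split => z /=.
- move=> [X [finX XS] <-]; exists (\sum_(x \in X) a x); first by exists X.
  by rewrite !fsbig_finite // ge0_sume_distrr.
- move=> [_ [X [finX XS] <-] <-]; exists X => //.
  by rewrite !fsbig_finite // ge0_sume_distrr.
Qed.

Lemma esum_seq (T : choiceType) (h : seq T -> \bar R) : (forall s, 0 <= h s) ->
  \esum_(s in [set: seq T]) h s =
  h [::] + \esum_(c in [set: T]) \esum_(s in [set: seq T]) h (c :: s).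
Proof.
move=> h0; rewrite (esumID [set [::]]) // setTI esum_set1 //; congr (_ + _).
rewrite esum_esum //.
rewrite (reindex_esum ([set: T] `*`` fun _ => setT) _ (fun k => k.1 :: k.2)) //.
split=> [[c s] _ //|[c s] [c' s'] _ _ /= [-> ->] //|].
by move=> [|c s] [_ //= _]; exists (c, s).
Qed.

Lemma esum_pair (A B : choiceType) (h : A * B -> \bar R) : (forall t, 0 <= h t) ->
  \esum_(t in [set: A * B]) h t =
  \esum_(a in [set: A]) \esum_(b in [set: B]) h (a, b).
Proof.
move=> h0; rewrite esum_esum //.
have -> : [set: A] `*`` (fun _ => [set: B]) = [set: A * B] by apply/seteqP; split.
by apply: eq_esum => -[].
Qed.

Lemma esum_fin (T : finType) (a : T -> \bar R) : (forall x, 0 <= a x) ->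
  \esum_(x in [set: T]) a x = \sum_(x : T) a x.
Proof.
move=> a0; rewrite esum_fset // ?fsbig_finite; try exact: finite_finset.
apply: perm_big; apply: uniq_perm; [exact: finmap.fset_uniq | exact: index_enum_uniq |].
move=> x; rewrite mem_index_enum.
by have /= -> := in_fset_set (@finite_finset _ [set: T]) x; apply/mem_set.
Qed.

(* Every finite set of sequences has bounded lengths. *)
Lemma esum_seq_le_trunc (T : choiceType) (h : seq T -> \bar R) (M : \bar R) :
  (forall N, \esum_(s in [set: seq T]) (if (size s <= N)%N then h s else 0) <= M) ->
  \esum_(s in [set: seq T]) h s <= M.
Proof.
move=> hN; apply: ge_ereal_sup => _ [X [finX _] <-].
have [B XB] := finite_fsetP.1 finX.
apply: le_trans (hN (\max_(s <- finmap.enum_fset B) size s)%N).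
apply: esum_ge; exists X; first by [].
apply: lee_fsum => // s Xs; rewrite ifT //; apply: leq_bigmax_seq => //.
by move: Xs; rewrite XB.
Qed.

End NonnegativeSums.

Section GeometricTrials.
Variables (R : realType) (T : finType) (p : T -> R) (good : pred T).
Hypotheses (p_ge0 : forall c, 0 <= p c) (p_sum1 : \sum_c p c = 1).

(* Probability that independent draws from [p], stopped at the first [good]
   one, produce exactly the list of outcomes [s]. *)
Fixpoint trials_weight (s : seq T) : R :=
  if s is c :: s' then
    if good c then (if s' is [::] then p c else 0) else p c * trials_weight s'
  else 0.

Definition success : R := \sum_(c | good c) p c.

Lemma failureE : \sum_(c | ~~ good c) p c = 1 - success.
Proof. by rewrite /success -p_sum1 [\sum_c _](bigID good) /= addrAC subrr add0r. Qed.

Lemma trials_weight_ge0 s : 0 <= trials_weight s.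
Proof.
elim: s => [|c s IH] //=; case: ifP => _; last exact: mulr_ge0.
by case: s {IH}.
Qed.

Lemma trials_weight_last x s :
  trials_weight s != 0 -> good (last x s) && (p (last x s) != 0).
Proof.
elim: s x => [|c s IH] x /=; first by rewrite eqxx.
case: ifP => gc; first by case: s {IH} => [|d s] /=; rewrite ?gc ?eqxx.
rewrite mulf_eq0 negb_or => /andP[_].
by case: s IH => [|d s] IH /=; [rewrite eqxx | exact: IH].
Qed.

Local Open Scope ereal_scope.

Definition trials_mean (phi : seq T -> \bar R) : \bar R :=
  \esum_(s in [set: seq T]) (trials_weight s)%:E * phi s.

Section Mean.
Variables phi psi : seq T -> \bar R.
Hypotheses (phi_ge0 : forall s, 0 <= phi s) (psi_ge0 : forall s, 0 <= psi s).

Let weighted_ge0 s : 0 <= (trials_weight s)%:E * phi s.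
Proof. by rewrite mule_ge0 // lee_fin trials_weight_ge0. Qed.

Lemma trials_mean_ge0 : 0 <= trials_mean phi.
Proof. exact: esum_ge0. Qed.

Lemma trials_meanD : trials_mean (fun s => phi s + psi s) = trials_mean phi + trials_mean psi.
Proof.
rewrite /trials_mean -esumD => [|s _|s _]; rewrite ?mule_ge0 ?lee_fin ?trials_weight_ge0 //.
by apply: eq_esum => s _; rewrite ge0_muleDr.
Qed.

Lemma trials_meanZ (k : R) : (0 <= k)%R ->
  trials_mean (fun s => k%:E * phi s) = k%:E * trials_mean phi.
Proof. by move=> k0; rewrite /trials_mean -esumZl //; apply: eq_esum => s _; rewrite muleCA. Qed.

Lemma trials_meanE : trials_mean phi =
  \sum_(c | good c) (p c)%:E * phi [:: c] +
  \sum_(c | ~~ good c) (p c)%:E * trials_mean (fun s => phi (c :: s)).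
Proof.
rewrite /trials_mean esum_seq // mul0e add0e esum_fin; last by move=> c; exact: esum_ge0.
rewrite (bigID good) /=; congr (_ + _); apply: eq_bigr => c gc.
  rewrite esum_seq => [|s]; last exact: weighted_ge0.
  rewrite esum1 ?adde0 /= ?gc // => d _.
  by rewrite esum1 // => s _; rewrite mul0e.
rewrite -esumZl //; last by move=> s; rewrite mule_ge0 // lee_fin trials_weight_ge0.
by apply: eq_esum => s _; rewrite /= (negbTE gc) EFinM muleA.
Qed.

Lemma trials_mean_le (U V : R) :
  (forall c, good c -> phi [:: c] <= U%:E) ->
  (forall c, ~~ good c -> trials_mean (fun s => phi (c :: s)) <= V%:E) ->
  trials_mean phi <= (success * U + (1 - success) * V)%:E.
Proof.
move=> hU hV; rewrite trials_meanE -failureE /success !mulr_suml EFinD -!sumEFin.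
by apply: leeD; apply: lee_sum => c gc; rewrite EFinM lee_wpmul2l ?lee_fin ?hU ?hV.
Qed.

Lemma eq_trials_mean : (forall s, trials_weight s != 0%R -> phi s = psi s) ->
  trials_mean phi = trials_mean psi.
Proof.
move=> h; apply: eq_esum => s _.
by have [->|/h ->] := eqVneq (trials_weight s) 0%R; rewrite ?mul0e.
Qed.

Lemma le_trials_mean : (forall s, trials_weight s != 0%R -> phi s <= psi s) ->
  trials_mean phi <= trials_mean psi.
Proof.
move=> h; apply: le_esum => s _.
have [->|/h le_s] := eqVneq (trials_weight s) 0%R; first by rewrite !mul0e.
by rewrite lee_wpmul2l // lee_fin trials_weight_ge0.
Qed.

Lemma trials_mean_le_trunc (M : \bar R) :
  (forall N, trials_mean (fun s => if (size s <= N)%N then phi s else 0) <= M) ->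
  trials_mean phi <= M.
Proof.
move=> hN; apply: esum_seq_le_trunc => N; apply: le_trans (hN N).
by apply: le_esum => s _; case: ifP; rewrite ?mule0.
Qed.

End Mean.

Lemma trials_mass_trunc_le1 N :
  trials_mean (fun s => if (size s <= N)%N then 1 else 0) <= 1.
Proof.
elim: N => [|N IH].
  by rewrite /trials_mean esum1 // => -[|c s] _ /=; rewrite ?mul0e ?mule0.
apply: le_trans (trials_mean_le (U := 1) (V := 1) _ _ _) _ => //.
- by move=> s; case: ifP.
- by rewrite !mulr1 addrC subrK.
Qed.

Lemma trials_mass_le1 : trials_mean (fun=> 1) <= 1.
Proof. by apply: trials_mean_le_trunc => // N; exact: trials_mass_trunc_le1. Qed.

Hypothesis success_gt0 : (0 < success)%R.

(* The mass [m] is a fixed point of [m = success + (1 - success) m]. *)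
Lemma trials_mass1 : trials_mean (fun=> 1) = 1.
Proof.
have fin : trials_mean (fun=> 1) \is a fin_num.
  by rewrite ge0_fin_numE ?(le_lt_trans trials_mass_le1) ?ltry ?trials_mean_ge0.
set m := fine (trials_mean (fun=> 1)).
have mE : trials_mean (fun=> 1) = m%:E by rewrite fineK.
have : m%:E = (success * 1 + (1 - success) * m)%:E.
  rewrite -mE {1}trials_meanE // -failureE /success !mulr_suml EFinD -!sumEFin.
  by congr (_ + _); apply: eq_bigr => c _; rewrite EFinM // mE.
move=> /eqP; rewrite eqe => /eqP fixm.
have : (success * m = success * 1)%R by lra.
by rewrite mE => /(mulfI (lt0r_neq0 success_gt0)) ->.
Qed.

Lemma trials_mean_size : trials_mean (fun s => (size s)%:R%:E) <= (success^-1)%:E.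
Proof.
apply: trials_mean_le_trunc => // N; elim: N => [|N IH].
  by rewrite /trials_mean esum1 ?lee_fin ?invr_ge0 ?ltW // => -[|c s] _ /=;
    rewrite ?mul0e ?mule0.
apply: le_trans (trials_mean_le (U := 1) (V := 1 + success^-1) _ _ _) _.
- by move=> s; case: ifP.
- by [].
- move=> c _.
  have -> : trials_mean (fun s => if (size s < N.+1)%N then (size s).+1%:R%:E else 0) =
      trials_mean (fun s => if (size s <= N)%N then 1 else 0) +
      trials_mean (fun s => if (size s <= N)%N then (size s)%:R%:E else 0).
    rewrite -trials_meanD => [|s|s]; try by case: ifP.
    congr trials_mean; apply/funext => s; rewrite ltnS.
    by case: ifP; rewrite ?adde0 // -nat1r EFinD.
  by rewrite EFinD leeD ?trials_mass_trunc_le1.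
- suff -> : (success * 1 + (1 - success) * (1 + success^-1) = success^-1)%R by [].
  by field; exact: lt0r_neq0.
Qed.

End GeometricTrials.

Lemma sum_card_class_ratio_le (R : numFieldType) (X : finType) (Y : eqType)
    (B : finType) (g : X -> Y) (h : X -> B) :
  \sum_x #|[set x' | g x' == g x]|%:R /
         #|[set x' | (g x' == g x) && (h x' == h x)]|%:R <= (#|B| * #|X|)%:R :> R.
Proof.
pose D x := [set x' | (g x' == g x) && (h x' == h x)].
have ratioE x : #|[set x' | g x' == g x]|%:R / #|D x|%:R =
    \sum_(x' | g x == g x') (#|D x|%:R)^-1 :> R.
  rewrite -sum1_card natr_sum mulr_suml; apply: eq_big => [x'|x' _]; first by rewrite inE eq_sym.
  by rewrite mul1r.
under eq_bigr do rewrite ratioE.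
rewrite (exchange_big_dep xpredT) //= natrM mulr_natr -sumr_const; apply: ler_sum => x' _.
rewrite (partition_big h xpredT) //= -sumr_const; apply: ler_sum => b _.
pose G := [set x | (g x == g x') && (h x == b)].
rewrite (eq_bigr (fun=> (#|G|%:R)^-1)) => [|x /andP[gx /eqP hx]]; last first.
  by congr (_%:R^-1); apply: eq_card => z; rewrite !inE hx (eqP gx).
rewrite (eq_bigl (mem G)); last by move=> x /=; rewrite !inE.
rewrite sumr_const -(mulr_natr (#|G|%:R^-1)).
have [->|G_neq0] := eqVneq #|G| 0%N; first by rewrite mulr0 ler01.
by rewrite mulVf // pnatr_eq0.
Qed.

Section Agreement.
Variable n : nat.

Definition prefix_bits (k : nat) (u : bits n) : bits n := [ffun j : 'I_n => (j < k)%N && u j].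

Lemma agreeE k (u v : bits n) : agree k u v = (prefix_bits k u == prefix_bits k v).
Proof.
apply/forallP/eqP => [uv|/ffunP uv j]; last first.
  by apply/implyP => jk; move: (uv j); rewrite !ffunE jk => /= ->.
apply/ffunP => j; rewrite !ffunE.
by case: (j < k)%N (implyP (uv j)) => // /(_ isT) /eqP ->.
Qed.

Lemma agree0 (u v : bits n) : agree 0 u v.
Proof. by apply/forallP => k; rewrite ltn0. Qed.

Lemma agreeS (i : 'I_n) (u v : bits n) :
  agree i.+1 u v = agree i u v && (u i == v i).
Proof.
apply/forallP/andP => [uv|[/forallP uv /eqP uvi] k].
  split; last exact: (implyP (uv i)).
  by apply/forallP => k; apply/implyP => ki; apply: (implyP (uv k)); exact: ltnW.
apply/implyP; rewrite ltnS leq_eqVlt => /orP[/eqP/ord_inj -> | ki]; first by rewrite uvi.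
exact: (implyP (uv k)).
Qed.

End Agreement.

Section OracleStage.
Variables (R : realType) (n : nat) (f : bits n -> bits n).

Lemma Astar_prob_ge0 x i c : 0 <= Astar_prob R f x i c.
Proof. by rewrite /Astar_prob; case: ifP => // _; rewrite invr_ge0 ler0n. Qed.

Lemma Astar_prob_sum1 x i : \sum_c Astar_prob R f x i c = 1.
Proof.
rewrite /Astar_prob -big_mkcond /= sumr_const -[_ *+ _]mulr_natr mulVf // pnatr_eq0 -lt0n.
by apply/card_gt0P; exists x; rewrite inE agreeE.
Qed.

Lemma Astar_prob_neq0 x i c : Astar_prob R f x i c != 0 -> c \in Astar_supp f x i.
Proof. by rewrite /Astar_prob; case: ifP; rewrite ?eqxx. Qed.

Lemma Astar_success x i b :
  success (Astar_prob R f x i) (fun c => f c i == b) =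
  #|[set c in Astar_supp f x i | f c i == b]|%:R / #|Astar_supp f x i|%:R.
Proof.
rewrite /success /Astar_prob -big_mkcondr /=.
rewrite (eq_bigl (mem [set c in Astar_supp f x i | f c i == b])); last first.
  by move=> c /=; rewrite !inE andbC.
by rewrite sumr_const -[_ *+ _]mulr_natr mulrC.
Qed.

Lemma extend_ok_cons b i c s : extend_ok f b i (c :: s) =
  if s is [::] then f c i == b else (f c i != b) && extend_ok f b i s.
Proof.
case: s => [|d s]; first by rewrite /extend_ok /= andbT.
rewrite /extend_ok rev_cons.
case E: (rev (d :: s)) => [|e fs]; first by move/(congr1 size): E; rewrite size_rev.
by rewrite rcons_cons /= all_rcons andbCA.
Qed.

Lemma extend_weightE x b i :
  extend_weight R f x b i =1 trials_weight (Astar_prob R f x i) (fun c => f c i == b).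
Proof.
elim=> [|c s IH] //=; rewrite -IH /extend_weight extend_ok_cons big_cons.
case: (f c i == b); case: s {IH} => [|d s] /=.
- by rewrite big_nil mulr1.
- by [].
- by rewrite mulr0.
- by case: ifP; rewrite ?mulr0.
Qed.

Lemma extend_weight_ge0 x b i cs : 0 <= extend_weight R f x b i cs.
Proof. by rewrite extend_weightE trials_weight_ge0 // => c; exact: Astar_prob_ge0. Qed.

End OracleStage.

Section Run.
Variables (R : realType) (n : nat) (f : bits n -> bits n) (y : bits n).

Definition prefix_class (k : nat) : {set bits n} := [set x | agree k (f x) y].

Definition stage_cost (k : nat) : R :=
  #|prefix_class k|%:R / #|prefix_class k.+1|%:R.

Lemma Astar_supp_prefix_class x (i : 'I_n) :
  agree i (f x) y -> Astar_supp f x i = prefix_class i.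
Proof.
by rewrite agreeE => /eqP fxy; apply/setP => z; rewrite !inE !agreeE fxy.
Qed.

Variable x_y : bits n.
Hypothesis f_x_y : f x_y = y.

Lemma prefix_class_gt0 k : (0 < #|prefix_class k|)%N.
Proof. by apply/card_gt0P; exists x_y; rewrite inE agreeE f_x_y. Qed.

Section Stage.
Variables (x : bits n) (i : 'I_n).
Hypothesis fx_agree : agree i (f x) y.

Local Notation p := (Astar_prob R f x i).
Local Notation good := (fun c => f c i == y i).

Lemma stage_success : success p good = (stage_cost i)^-1.
Proof.
rewrite Astar_success Astar_supp_prefix_class // /stage_cost invf_div.
by congr (_%:R / _%:R); apply: eq_card => z; rewrite !inE agreeS.
Qed.

Lemma stage_success_gt0 : 0 < success p good.
Proof. by rewrite stage_success invr_gt0 divr_gt0 // ltr0n prefix_class_gt0. Qed.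

Lemma stage_mass1 : trials_mean p good (fun=> 1%E) = 1%E.
Proof.
exact: trials_mass1 (@Astar_prob_ge0 R n f x i) (Astar_prob_sum1 R f x i) stage_success_gt0.
Qed.

Lemma stage_mean_calls : (trials_mean p good (fun cs => (size cs)%:R%:E) <= (stage_cost i)%:E)%E.
Proof.
rewrite -[stage_cost i]invrK -stage_success.
exact: trials_mean_size (@Astar_prob_ge0 R n f x i) (Astar_prob_sum1 R f x i) stage_success_gt0.
Qed.

Lemma stage_last_agree cs :
  trials_weight p good cs != 0 -> agree i.+1 (f (last x cs)) y.
Proof.
move=> /(trials_weight_last x) /andP[last_good /Astar_prob_neq0].
by rewrite Astar_supp_prefix_class // inE agreeS => ->.
Qed.

End Stage.

Local Open Scope ereal_scope.

Definition run_mean (st : seq 'I_n) (x : bits n) (phi : seq (seq (bits n)) -> R) :=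
  \esum_(css in [set: seq (seq (bits n))]) (run_weight R f y st x css * phi css)%:E.

Lemma run_weight_ge0 st x css : (0 <= run_weight R f y st x css)%R.
Proof.
elim: st x css => [|i st IH] x [|cs css] //=.
by rewrite mulr_ge0 // extend_weight_ge0.
Qed.

Section RunMean.
Variable phi : seq (seq (bits n)) -> R.
Hypothesis phi_ge0 : forall css, (0 <= phi css)%R.

Let weighted_ge0 st x css : 0 <= (run_weight R f y st x css * phi css)%:E.
Proof. by rewrite lee_fin mulr_ge0 ?run_weight_ge0. Qed.

Lemma run_mean_nil x : run_mean [::] x phi = (phi [::])%:E.
Proof.
rewrite /run_mean esum_seq // mul1r esum1 ?adde0 // => cs _.
by rewrite esum1 // => css _; rewrite mul0r.
Qed.

Lemma run_mean_cons i st x : run_mean (i :: st) x phi =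
  trials_mean (Astar_prob R f x i) (fun c => f c i == y i)
    (fun cs => run_mean st (last x cs) (fun css => phi (cs :: css))).
Proof.
rewrite /run_mean esum_seq // mul0r add0e; apply: eq_esum => cs _.
rewrite -extend_weightE -esumZl ?extend_weight_ge0 //; last first.
  by move=> css; rewrite lee_fin mulr_ge0 ?run_weight_ge0.
by apply: eq_esum => css _; rewrite /= -mulrA EFinM.
Qed.

End RunMean.

Lemma run_mean_calls_cons st x cs :
  run_mean st x (fun css => (sumn (map size (cs :: css)))%:R) =
  (size cs)%:R%:E * run_mean st x (fun=> 1%R) +
  run_mean st x (fun css => (sumn (map size css))%:R).
Proof.
rewrite /run_mean -esumZl // => [|css]; last by rewrite lee_fin mulr1 run_weight_ge0.
rewrite -esumD => [|css _|css _]; rewrite ?mule_ge0 ?lee_fin ?mulr_ge0 ?run_weight_ge0 //.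
by apply: eq_esum => css _; rewrite /= natrD mulrDr mulr1 EFinD EFinM muleC.
Qed.

Lemma run_mass1 st : forall j x, map val st = iota j (size st) -> agree j (f x) y ->
  run_mean st x (fun=> 1%R) = 1.
Proof.
elim: st => [|i st IH] j x /=; first by rewrite run_mean_nil.
case=> ij st_iota fx_agree; have fxi : agree i (f x) y by rewrite ij.
rewrite run_mean_cons // -(stage_mass1 fxi); apply: eq_trials_mean => cs.
by move=> /(stage_last_agree fxi); rewrite ij; exact: IH.
Qed.

Lemma run_calls_le st : forall j x, map val st = iota j (size st) -> agree j (f x) y ->
  run_mean st x (fun css => (sumn (map size css))%:R) <= (\sum_(k <- st) stage_cost k)%:E.
Proof.
elim: st => [|i st IH] j x /=.
  by move=> _ _; rewrite run_mean_nil ?big_nil // => css; rewrite ler0n.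
case=> ij st_iota fx_agree; have fxi : agree i (f x) y by rewrite ij.
set K := (\sum_(k <- st) stage_cost k)%R.
have K_ge0 : (0 <= K)%R by apply: sumr_ge0 => k _; rewrite divr_ge0.
have p_ge0 := @Astar_prob_ge0 R n f x i.
rewrite run_mean_cons // big_cons.
apply: (@le_trans _ _ (trials_mean (Astar_prob R f x i) (fun c => f c i == y i)
    (fun cs => (size cs)%:R%:E + K%:E * 1))).
  apply: (le_trials_mean p_ge0) => cs /(stage_last_agree fxi); rewrite ij => last_agree.
  rewrite run_mean_calls_cons (run_mass1 st_iota last_agree) !mule1.
  by rewrite leeD // (IH _ _ st_iota last_agree).
rewrite trials_meanD // => [|s]; last by rewrite mule_ge0 ?lee_fin.
by rewrite trials_meanZ // (stage_mass1 fxi) mule1 EFinD leeD // stage_mean_calls.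
Qed.

End Run.

Lemma sum_inv_card (R : numFieldType) (T : finType) (t : T) :
  \sum_(u : T) (#|{: T}|%:R)^-1 = 1 :> R.
Proof.
rewrite sumr_const -[_ *+ _]mulr_natr mulVf // pnatr_eq0 -lt0n.
by apply/card_gt0P; exists t.
Qed.

Section ExpectedCalls.
Variables (R : realType) (n : nat) (f : bits n -> bits n).

Lemma sum_stage_cost_le (k : 'I_n) :
  \sum_(x : bits n) stage_cost R f (f x) k <= 2 * #|{: bits n}|%:R.
Proof.
pose g := prefix_bits k \o f.
have costE x : stage_cost R f (f x) k = #|[set x' | g x' == g x]|%:R /
    #|[set x' | (g x' == g x) && (f x' k == f x k)]|%:R.
  by congr (_%:R / _%:R); apply: eq_card => z; rewrite !inE ?agreeS agreeE.
under eq_bigr do rewrite costE.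
by apply: le_trans (sum_card_class_ratio_le R g (fun x => f x k)) _; rewrite card_bool natrM.
Qed.

Local Open Scope ereal_scope.

Local Notation uniform := ((#|{: bits n}|%:R)^-1 : R)%R.

Lemma esum_trace_weight y (phi : seq (seq (bits n)) -> R) :
  (forall css, (0 <= phi css)%R) ->
  \esum_(t in [set: bits n * seq (seq (bits n))]) (trace_weight R f y t * phi t.2)%:E =
  \sum_(x : bits n) uniform%:E * run_mean f y (enum 'I_n) x phi.
Proof.
move=> phi_ge0; have weight_ge0 x css : (0 <= run_weight R f y (enum 'I_n) x css * phi css)%R.
  by rewrite mulr_ge0 ?run_weight_ge0.
rewrite esum_pair => [|t]; last by rewrite lee_fin -mulrA mulr_ge0 ?invr_ge0.
rewrite esum_fin => [|x]; last by apply: esum_ge0 => css _; rewrite lee_fin -mulrA mulr_ge0 ?invr_ge0.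
apply: eq_bigr => x _; rewrite /run_mean -esumZl ?invr_ge0 // => [|css]; last by rewrite lee_fin.
by apply: eq_esum => css _; rewrite /trace_weight /= -mulrA EFinM.
Qed.

Lemma expected_calls_le x_y :
  expected_calls R f (f x_y) <= (\sum_(k < n) stage_cost R f (f x_y) k)%:E.
Proof.
have enum_iota : map val (enum 'I_n) = iota 0 (size (enum 'I_n)).
  by rewrite val_enum_ord size_enum_ord.
have mass1 : \esum_(t in [set: bits n * seq (seq (bits n))])
    (trace_weight R f (f x_y) t)%:E = 1.
  transitivity (\esum_(t in [set: bits n * seq (seq (bits n))])
      (trace_weight R f (f x_y) t * 1)%:E); first by apply: eq_esum => t _; rewrite mulr1.
  rewrite (@esum_trace_weight (f x_y) (fun=> 1%R)) //.
  under eq_bigr do rewrite (run_mass1 R (x_y := x_y) erefl enum_iota (agree0 _ _)) mule1.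
  by rewrite sumEFin (sum_inv_card _ x_y).
rewrite /expected_calls mass1 eqxx.
rewrite (@esum_trace_weight (f x_y) (fun css => (sumn (map size css))%:R)) => [|css]; last exact: ler0n.
have -> : (\sum_(k < n) stage_cost R f (f x_y) k =
    \sum_(k <- enum 'I_n) stage_cost R f (f x_y) k)%R by rewrite big_enum.
set K := (\sum_(k <- enum 'I_n) stage_cost R f (f x_y) k)%R.
apply: (@le_trans _ _ (\sum_(x : bits n) uniform%:E * K%:E)).
  apply: lee_sum => x _; rewrite lee_wpmul2l ?lee_fin ?invr_ge0 //.
  exact: (run_calls_le R (x_y := x_y) erefl enum_iota (agree0 (f x) _)).
by rewrite -ge0_sume_distrl ?sumEFin ?(sum_inv_card _ x_y) ?mul1e // => x _; rewrite lee_fin invr_ge0.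
Qed.

End ExpectedCalls.

Theorem lemma4p2 (R : realType) (n : nat) (f : bits n -> bits n) :
  (@expected_calls_random R n f <= (2 * n)%:R%:E)%E.
Proof.
set M : R := #|{: bits n}|%:R.
have M_neq0 : M != 0 by rewrite pnatr_eq0 -lt0n; apply/card_gt0P; exists [ffun=> false].
rewrite /expected_calls_random.
apply: (@le_trans _ _ (\sum_(x : bits n) (M^-1)%:E * (\sum_(k < n) stage_cost R f (f x) k)%:E))%E.
  apply: lee_sum => x _; rewrite lee_wpmul2l ?lee_fin ?invr_ge0 //.
  exact: expected_calls_le.
under eq_bigr do rewrite -EFinM.
rewrite sumEFin lee_fin -mulr_sumr exchange_big /=.
apply: le_trans (ler_wpM2l _ (ler_sum _ (fun k _ => sum_stage_cost_le R f k))) _.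
  by rewrite invr_ge0.
by rewrite sumr_const card_ord (mulrnAr M^-1) (mulrCA M^-1) mulVf // mulr1 natrM mulr_natr.
Qed.
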